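(* For every $n\ge 1$, the Poincar\'e series of $\mathrm{Kh}_{alg}(n,\infty;\mathbb{Z}/2)$ is $$P_{n}(q,t;\mathbb{Z}/2)=\prod_{i=0}^{n-1}\frac{1+q^{2i+4}t^{2i+1}}{1-q^{2i+2}t^{2i}}\ \prod_{i=0}^{\lfloor\frac{n-1}{2}\rfloor}\frac{1-q^{4i+4}t^{4i}}{1+q^{4i+4}t^{4i+1}}.$$
   Context: For a commutative ring $R$ and $n\ge1$, let $A_n(R)=R[x_0,\dots,x_{n-1}]\otimes_R\Lambda_R[\xi_0,\dots,\xi_{n-1}]$ be the free graded-commutative $R$-algebra on even generators $x_k$ and odd generators $\xi_k$ (odd generators anticommute and square to zero). It is bigraded by declaring $x_k$ to have $q$-degree $2k+2$ and $t$-degree $2k$, and $\xi_k$ to have $q$-degree $2k+4$ and $t$-degree $2k+1$. Let $d_2$ be the unique $R$-linear odd derivation (i.e. $d_2(ab)=d_2(a)b+(-1)^{|a|}a\,d_2(b)$, where $|a|$ is the number of $\xi$'s mod 2) with $d_2(x_k)=0$ and $d_2(\xi_k)=\sum_{i=0}^{k}x_ix_{k-i}$. Then $d_2^2=0$, $d_2$ preserves $q$-degree and lowers $t$-degree by 1. $\mathrm{Kh}_{alg}(n,\infty;R)$ denotes the homology $H(A_n(R),d_2)$, a bigraded $R$-algebra. For a field $F$ the Poincar\'e series is $\sum_{a,b}\dim_F \mathrm{Kh}_{alg}(n,\infty;F)^{a,b}\,q^a t^b$, where $a$ is the $q$-degree and $b$ the $t$-degree. *)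

From HB Require Import structures.
From mathcomp Require Import all_boot all_order all_algebra.
Set Implicit Arguments. Unset Strict Implicit. Unset Printing Implicit Defensive.
Import Order.TTheory GRing.Theory Num.Theory.
Local Open Scope ring_scope.

(* A basis monomial x^e xi_S is encoded by (e, S); xi_S means the product
   xi_{s_1} ... xi_{s_m} with s_1 < ... < s_m (x's written in front). *)
Definition mon (n : nat) := ({ffun 'I_n -> nat} * {set 'I_n})%type.

Definition mon0 (n : nat) : mon n := ([ffun => 0%N], set0).

Definition qdeg n (m : mon n) : nat :=
  (\sum_(k < n) (2 * k + 2) * m.1 k + \sum_(k in m.2) (2 * k + 4))%N.
Definition tdeg n (m : mon n) : nat :=
  (\sum_(k < n) (2 * k) * m.1 k + \sum_(k in m.2) (2 * k + 1))%N.

(* Monomials of q-degree a have all exponents <= a, so this enumeration is complete. *)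
Definition tomon n a (p : ({ffun 'I_n -> 'I_a.+1} * {set 'I_n})%type) : mon n :=
  ([ffun k => nat_of_ord (p.1 k)], p.2).

Definition basis n (a b : nat) : seq (mon n) :=
  [seq m <- [seq tomon p | p : ({ffun 'I_n -> 'I_a.+1} * {set 'I_n})%type]
     | (qdeg m == a) && (tdeg m == b)].

Definition addx n (e : {ffun 'I_n -> nat}) (i j : nat) : {ffun 'I_n -> nat} :=
  [ffun l : 'I_n => (e l + (val l == i) + (val l == j))%N].

(* Coefficient of the monomial m' in d_2(m), where d_2 is the odd derivation with
   d_2 x_k = 0, d_2 xi_k = sum_{i=0}^k x_i x_{k-i}:
     d_2(x^e xi_S) = sum_{k in S} (-1)^{#{j in S | j < k}} x^e (sum_{i=0}^k x_i x_{k-i}) xi_{S\k}. *)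
Definition dcoef (R : pzRingType) n (m m' : mon n) : R :=
  \sum_(k < n | (k \in m.2) && (m'.2 == m.2 :\ k))
     ((-1) ^+ #|[set j in m.2 | (j < k)%N]| *
      (\sum_(i < k.+1) ((m'.1 == addx m.1 i (k - i)%N) : nat)%:R))%R.

Definition dtgt n (a b : nat) : seq (mon n) :=
  if b is b'.+1 then basis n a b' else [::].

(* Matrix of d_2 : A^{a,b} -> A^{a,b-1} (row-vector convention: u *m Dmat). *)
Definition Dmat (R : pzRingType) n (a b : nat) :
    'M[R]_(size (basis n a b), size (dtgt n a b)) :=
  \matrix_(i, j) dcoef R (nth (mon0 n) (basis n a b) i) (nth (mon0 n) (dtgt n a b) j).

(* dim_F of Kh_alg(n, oo; F)^{a,b} = dim ( ker(d_2 on A^{a,b}) / im(d_2 : A^{a,b+1} -> A^{a,b}) ).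
   (The image is intersected with the kernel; it is contained in it since d_2^2 = 0.) *)
Definition Hdim (F : fieldType) n (a b : nat) : nat :=
  (\rank (kermx (Dmat F n a b))
   - \rank (kermx (Dmat F n a b) :&: Dmat F n a b.+1)%MS)%N.

Definition ps := nat -> nat -> int.
Definition ps1 : ps := fun a b => ((a == 0%N) && (b == 0%N) : nat)%:Z.
Definition psmul (f g : ps) : ps := fun a b =>
  (\sum_(i < a.+1) \sum_(j < b.+1) f i j * g (a - i)%N (b - j)%N)%R.
Definition ps1p (c : int) (al be : nat) : ps := fun a b =>
  (ps1 a b + if (a == al) && (b == be) then c else 0)%R.
(* 1/(1 - c q^al t^be) = sum_k c^k q^{k al} t^{k be}  (used only with al > 0) *)
Definition psgeom (c : int) (al be : nat) : ps := fun a b =>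
  if ((al %| a)%N && (b == (a %/ al) * be)%N) then (c ^+ (a %/ al)%N)%R else 0%R.

Definition Pseries (n : nat) : ps :=
  psmul
    (\big[psmul/ps1]_(i < n)
        psmul (ps1p 1 (2 * i + 4) (2 * i + 1)) (psgeom 1 (2 * i + 2) (2 * i)))
    (\big[psmul/ps1]_(i < (n.-1)./2.+1)
        psmul (ps1p (-1) (4 * i + 4) (4 * i)) (psgeom (-1) (4 * i + 4) (4 * i + 1))).

From HB Require Import structures.
From mathcomp Require Import all_boot all_order all_algebra.
From mathcomp Require Import zify ring.
Set Implicit Arguments. Unset Strict Implicit. Unset Printing Implicit Defensive.
Import Order.TTheory GRing.Theory Num.Theory.
Local Open Scope ring_scope.

(* Over F_2 the cross terms of d_2 xi_k = sum_i x_i x_{k-i} cancel in pairs, so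
   d_2 xi_k = x_{k/2}^2 for k even and d_2 xi_k = 0 for k odd (dcoef_F2).  We compute
   the homology by an acyclic matching on the monomial basis, in the spirit of
   discrete Morse theory: call an even index k an obstruction of a monomial m if
   xi_k occurs in m or x_{k/2}^2 divides m, and let the pivot be the least one.
   Monomials whose pivot xi_k occurs ("upper") are matched with their contraction
   xi_k |-> x_{k/2}^2 ("lower"); monomials with no obstruction are "critical".
   In the matched basis the block of d_2 from upper to lower monomials is the
   matching itself, critical monomials are cycles and d_2 of an upper monomial has
   no critical component, so rank d_2 = #upper and the homology dimension is
   the number of critical monomials (Hdim_F2).  These are
   x^e prod_{l odd} xi_l^{s_l} with e_l <= 1 for l < ceil(n/2), so their generating
   function is prod_{l < ceil(n/2)} (1 + x_l) prod_{l >= ceil(n/2)} 1/(1 - x_l)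
   prod_{l odd} (1 + xi_l), which agrees with the claimed product after cancelling
   (1 + xi_{2i})/(1 + xi_{2i}) and (1 - x_i^2)/(1 - x_i).  Power series are compared
   coefficientwise on a box of degrees, through polynomial truncations. *)

Notation F2 := [the fieldType of 'F_2].

Lemma half_le (k : nat) : (k./2 <= k)%N.
Proof. by rewrite leq_half_double; lia. Qed.

Lemma even_half (k : nat) : ~~ odd k -> (k./2).*2 = k.
Proof. by move=> k_even; rewrite -[RHS]odd_double_half (negbTE k_even). Qed.

Lemma F2_N1 : (-1 : F2) = 1. Proof. exact: val_inj. Qed.

Lemma F2_addxx (x : F2) : x + x = 0.
Proof. by rewrite -mulr2n -mulr_natr (_ : 2%:R = 0 :> F2) ?mulr0 //; exact: val_inj. Qed.

Lemma sum_palindrome_F2 (k : nat) (G : nat -> F2) :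
  (forall i, (i <= k)%N -> G (k - i)%N = G i) ->
  \sum_(i < k.+1) G i = if odd k then 0 else G k./2.
Proof.
move=> symG.
rewrite (bigID (fun i : 'I_k.+1 => (i < k - i)%N)) /=.
rewrite [X in _ + X](bigID (fun i : 'I_k.+1 => (k - i < i)%N)) /=.
have mirror : \sum_(i < k.+1 | ~~ (i < k - i)%N && (k - i < i)%N) G i
            = \sum_(i < k.+1 | (i < k - i)%N) G i.
  rewrite (reindex_inj rev_ord_inj) /=; apply: eq_big => [i|i _]; rewrite subSS.
    by have := ltn_ord i; lia.
  by rewrite symG // -ltnS.
rewrite mirror addrA F2_addxx add0r.
case: (boolP (odd k)) => [k_odd|k_even].
  rewrite big_pred0 // => i; apply/negP => /andP[]; rewrite -!leqNgt => h1 h2.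
  have ik : k = (i + i)%N by have := ltn_ord i; lia.
  by move: k_odd; rewrite ik addnn odd_double.
have := even_half k_even; rewrite -addnn => half_k.
have hk2 : (k./2 < k.+1)%N by lia.
rewrite (big_pred1 (Ordinal hk2)) // => i /=.
rewrite -!leqNgt -(inj_eq val_inj) /=; apply/andP/eqP; lia.
Qed.

Section DifferentialF2.
Variable n : nat.
Implicit Types (m : mon n).

Lemma addxC (e : {ffun 'I_n -> nat}) (i j : nat) : addx e i j = addx e j i.
Proof. by apply/ffunP => l; rewrite !ffunE addnAC. Qed.

(* Over F_2, d_2 xi_k = x_{k/2}^2 for k even and d_2 xi_k = 0 for k odd, so the
   only terms of d_2 (x^e xi_S) contract an even index k of S to x_{k/2}^2. *)
Definition contractible (k : 'I_n) m := (k \in m.2) && ~~ odd k.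
Definition contract (k : 'I_n) m : mon n := (addx m.1 k./2 k./2, m.2 :\ k).

Lemma dcoef_F2 m m' :
  dcoef F2 m m' = \sum_(k < n) (contractible k m && (m' == contract k m))%:R.
Proof.
rewrite /dcoef big_mkcond /=; apply: eq_bigr => k _.
rewrite /contractible /contract; case: (boolP (k \in m.2)) => //= k_in.
case: m' => [e' S'] /=; rewrite xpair_eqE /=.
case: (eqVneq S' (m.2 :\ k)) => _; last by rewrite !andbF.
rewrite F2_N1 expr1n mul1r andbT.
rewrite (@sum_palindrome_F2 k (fun i => ((e' == addx m.1 i (k - i)) : nat)%:R)).
  case: (boolP (odd k)) => //= k_even.
  by rewrite (_ : (k - k./2)%N = k./2) //; have := even_half k_even; rewrite -addnn; lia.
by move=> i ik /=; rewrite addxC (_ : (k - (k - i))%N = i) //; lia.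
Qed.
Definition half_ord (k : 'I_n) : 'I_n :=
  Ordinal (leq_ltn_trans (half_le k) (ltn_ord k)).

Lemma wsum_addx (c : nat -> nat) (e : {ffun 'I_n -> nat}) (k : 'I_n) :
  (\sum_(l < n) c l * addx e k./2 k./2 l = \sum_(l < n) c l * e l + c k./2 * 2)%N.
Proof.
rewrite (eq_bigr (fun l : 'I_n => c l * e l + (c l * 2) * (l == half_ord k))%N); last first.
  by move=> l _; rewrite ffunE -(inj_eq val_inj) /= -addnA addnn -mul2n mulnDr mulnA.
rewrite big_split /=; congr (_ + _)%N.
rewrite (bigD1 (half_ord k)) //= eqxx muln1 big1 ?addn0 // => l /negbTE->.
by rewrite muln0.
Qed.

Lemma qdeg_contract k m : contractible k m -> qdeg (contract k m) = qdeg m.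
Proof.
case/andP=> k_in k_even; rewrite /qdeg /contract /= (wsum_addx (fun l => 2 * l + 2)%N).
rewrite (big_setD1 k k_in) /= [RHS]addnA; congr (_ + _ + _)%N.
by have := even_half k_even; rewrite -mul2n; lia.
Qed.

Lemma tdeg_contract k m : contractible k m -> tdeg m = (tdeg (contract k m)).+1.
Proof.
case/andP=> k_in k_even; rewrite /tdeg /contract /= (wsum_addx (fun l => 2 * l)%N).
rewrite (big_setD1 k k_in) /= addnA -addSn -addnS; congr (_ + _ + _)%N.
by have := even_half k_even; rewrite -mul2n; lia.
Qed.

End DifferentialF2.

Section Basis.
Variable n : nat.
Implicit Types (m : mon n).

Lemma exp_le_qdeg m (l : 'I_n) : (m.1 l <= qdeg m)%N.
Proof.
rewrite /qdeg; apply: leq_trans (leq_addr _ _).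
by rewrite (bigD1 l) //=; apply: leq_trans (leq_addr _ _); apply: leq_pmull; lia.
Qed.

Lemma mem_basis a b m : (m \in basis n a b) = (qdeg m == a) && (tdeg m == b).
Proof.
rewrite mem_filter; case: (boolP ((qdeg m == a) && (tdeg m == b))) => //= /andP[/eqP qm _].
have small l : (m.1 l < a.+1)%N by rewrite ltnS -qm exp_le_qdeg.
apply/imageP; exists ([ffun l => Ordinal (small l)], m.2) => //.
by case: m small qm => e S small _; congr (_, _); apply/ffunP => l; rewrite !ffunE.
Qed.

Lemma uniq_basis a b : uniq (basis n a b).
Proof.
apply: filter_uniq; rewrite /image_mem map_inj_uniq ?enum_uniq //.
move=> [f S] [f' S'] /= [] Ef ->; congr (_, _); apply/ffunP => l.
by apply/val_inj; have := congr1 (fun g : {ffun 'I_n -> nat} => g l) Ef; rewrite !ffunE.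
Qed.

Lemma uniq_dtgt a b : uniq (dtgt n a b).
Proof. by case: b => [|b] //; exact: uniq_basis. Qed.

Lemma contract_mem_basis a b m (k : 'I_n) :
  m \in basis n a b.+1 -> contractible k m -> contract k m \in basis n a b.
Proof.
rewrite !mem_basis => /andP[/eqP qm /eqP tm] k_ok.
by rewrite (qdeg_contract k_ok) qm eqxx /=; move: tm; rewrite (tdeg_contract k_ok) => -[->].
Qed.

End Basis.

Lemma sum_delta_seq (T : eqType) (s : seq T) (x : T) (G : T -> F2) :
  uniq s -> x \in s -> \sum_(y <- s) (y == x)%:R * G y = G x.
Proof.
move=> s_uniq x_in; rewrite (bigD1_seq x) //= eqxx mul1r big1 ?addr0 // => y /negbTE ->.
by rewrite mul0r.
Qed.

Lemma sum_delta_ord (m : nat) (j0 : 'I_m) (G : 'I_m -> F2) :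
  \sum_(j < m) (j == j0)%:R * G j = G j0.
Proof. by rewrite (bigD1 j0) //= eqxx mul1r big1 ?addr0 // => j /negbTE ->; rewrite mul0r. Qed.

Lemma sum_nth (T : Type) (x0 : T) (s : seq T) (G : T -> F2) :
  \sum_(j < size s) G (nth x0 s j) = \sum_(y <- s) G y.
Proof. by rewrite (big_nth x0) big_mkord. Qed.

Lemma sum_symmetric_F2 (m : nat) (B : 'I_m -> 'I_m -> bool) :
  (forall k, B k k = false) -> (forall k k', B k k' = B k' k) ->
  \sum_(k < m) \sum_(k' < m) (B k k')%:R = 0 :> F2.
Proof.
move=> B_diag B_sym; rewrite pair_big /=.
pose swap (p : 'I_m * 'I_m) := (p.2, p.1).
have swapK : involutive swap by case.
rewrite (bigID (fun p : 'I_m * 'I_m => (p.1 < p.2)%N)) /=.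
rewrite [X in _ + X](bigID (fun p : 'I_m * 'I_m => (p.2 < p.1)%N)) /=.
rewrite [X in _ + (_ + X)]big1 => [|[k k'] /= /andP[]]; last first.
  rewrite -!leqNgt => h1 h2; rewrite (_ : k' = k) ?B_diag //.
  by apply/val_inj/eqP; rewrite eqn_leq h1 h2.
rewrite addr0 [X in _ + X](reindex_inj (can_inj swapK)) /=.
under [X in _ + X]eq_bigr => p _ do rewrite B_sym.
rewrite [X in _ + X](eq_bigl (fun p : 'I_m * 'I_m => (p.1 < p.2)%N)) ?F2_addxx // => -[k k'] /=.
by case: (ltngtP k k').
Qed.

Section SquareZero.
Variables n a : nat.
Local Notation s b := (basis n a b).
Local Notation D b := (Dmat F2 n a b).

Lemma contract_comm (m : mon n) (k k' : 'I_n) :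
  contractible k m -> contractible k' (contract k m) ->
  [/\ contractible k' m, contractible k (contract k' m)
    & contract k' (contract k m) = contract k (contract k' m)].
Proof.
rewrite /contractible /contract /= in_setD1 => /andP[k_in k_even] /andP[/andP[kk' k'_in] k'_even].
rewrite k'_in k'_even in_setD1 eq_sym kk' k_in k_even; split=> //.
congr (_, _); first by apply/ffunP => l; rewrite !ffunE; lia.
by apply/setP => l; rewrite !in_setD1 andbCA.
Qed.

(* d_2 o d_2 = 0 over F_2: the length-two paths m -> m'' come in pairs (k, k'), (k', k). *)
Lemma Dmat_square0 b : D b.+1 *m D b = 0.
Proof.
apply/matrixP => i l; rewrite !mxE.
set m := nth (mon0 n) (s b.+1) i; set m'' := nth (mon0 n) (dtgt n a b) l.
have m_in : m \in s b.+1 by apply: mem_nth.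
under eq_bigr do rewrite !mxE.
rewrite (sum_nth (mon0 n) (s b) (fun y => dcoef F2 m y * dcoef F2 y m'')).
under eq_bigr do rewrite dcoef_F2 mulr_suml.
rewrite exchange_big /=.
have -> : \sum_(k < n) \sum_(y <- s b)
            ((contractible k m && (y == contract k m))%:R * dcoef F2 y m'')
  = \sum_(k < n) \sum_(k' < n) ((contractible k m && contractible k' (contract k m))
                                  && (m'' == contract k' (contract k m)))%:R.
  apply: eq_bigr => k _; case: (boolP (contractible k m)) => k_ok /=.
    rewrite sum_delta_seq ?uniq_basis ?contract_mem_basis // dcoef_F2.
    by apply: eq_bigr => k' _; rewrite andbA.
  by rewrite big1 => [|y _]; rewrite ?mul0r // big1.
apply: sum_symmetric_F2 => [k|k k'].
  by apply/negP => /andP[/andP[_ /andP[]]]; rewrite /contract /= in_setD1 eqxx.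
case: (boolP (contractible k m && contractible k' (contract k m))) => [/andP[h1 h2]|h] /=.
  by have [-> -> ->] := contract_comm h1 h2.
case: (boolP (contractible k' m && contractible k (contract k' m))) => [/andP[h1 h2]|//] /=.
by have [h3 h4 _] := contract_comm h1 h2; rewrite h3 h4 in h.
Qed.

End SquareZero.

Section Matching.
Variable n : nat.
Implicit Types (m : mon n).

(* An even index k obstructs m if xi_k occurs in m or x_{k/2}^2 divides m.  The
   monomials without obstruction will form a basis of the homology (Hdim_F2). *)
Definition obstruction m (k : 'I_n) :=
  ~~ odd k && ((k \in m.2) || (1 < m.1 (half_ord k)))%N.

Definition pivot m :=
  [pick k | obstruction m k & [forall j : 'I_n, (j < k)%N ==> ~~ obstruction m j]].

Lemma pivotP m k :
  pivot m = Some k <-> obstruction m k /\ (forall j : 'I_n, (j < k)%N -> ~~ obstruction m j).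
Proof.
rewrite /pivot; case: pickP => [k' /andP[ob' /forallP min']|none]; split.
- by case=> <-; split=> // j; apply/implyP/min'.
- case=> ob min; congr Some; apply/val_inj/eqP; rewrite eqn_leq.
  apply/andP; split; rewrite leqNgt; apply/negP => lt.
    by move: (min' k); rewrite lt ob.
  by move: (min _ lt); rewrite ob'.
- by [].
- case=> ob min; move: (none k); rewrite ob /=; move/negbT/negP; case.
  by apply/forallP => j; apply/implyP/min.
Qed.

Lemma pivotN m : pivot m = None <-> (forall k, ~~ obstruction m k).
Proof.
split=> [none k|none]; last first.
  by rewrite /pivot; case: pickP => // k /andP[ob _]; move: (none k); rewrite ob.
apply/negP => ob; case: (arg_minnP (fun j : 'I_n => val j) ob) => j ob_j min_j.
suff : pivot m = Some j by rewrite none.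
apply/pivotP; split=> // i lt; apply/negP => ob_i.
by move: (min_j _ ob_i); rewrite leqNgt lt.
Qed.

(* The matching: if the pivot k of m is in S, m is "upper" and is matched with its
   contraction at k; if it is not, m is "lower" and is matched with m x_{k/2}^{-2} xi_k;
   monomials without pivot are "critical". *)
Definition upper m := if pivot m is Some k then k \in m.2 else false.
Definition lower m := if pivot m is Some k then k \notin m.2 else false.
Definition critical m := pivot m == None.

Lemma upper_lower m : upper m -> lower m = false.
Proof. by rewrite /upper /lower; case: (pivot m) => // k ->. Qed.
Lemma upper_critical m : upper m -> critical m = false.
Proof. by rewrite /upper /critical; case: (pivot m). Qed.
Lemma lower_critical m : lower m -> critical m = false.
Proof. by rewrite /lower /critical; case: (pivot m). Qed.
Lemma matching_trichotomy m : [|| upper m, lower m | critical m].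
Proof. by rewrite /upper /lower /critical; case: (pivot m) => // k; case: (k \in m.2). Qed.

Lemma criticalE m : critical m = [forall k, ~~ obstruction m k].
Proof.
rewrite /critical; apply/eqP/forallP => [/pivotN none k|none]; first exact: none.
by apply/pivotN => k; exact: none.
Qed.

Lemma contractible_obstruction m k : contractible k m -> obstruction m k.
Proof. by case/andP=> k_in k_even; rewrite /obstruction k_even k_in. Qed.

Lemma obstruction_contract m k j :
  contractible k m -> j != k -> obstruction (contract k m) j = obstruction m j.
Proof.
case/andP=> k_in k_even jk; rewrite /obstruction /contract /= in_setD1 jk /=.
case: (boolP (odd j)) => //= j_even; congr (_ || _); rewrite ffunE /=.
have -> : (j./2 == k./2) = false.
  apply/negP => /eqP e; move: jk; rewrite -(inj_eq val_inj) /=.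
  by rewrite -(even_half j_even) -(even_half k_even) e eqxx.
by rewrite !addn0.
Qed.

Lemma obstruction_contract_self m k : contractible k m -> obstruction (contract k m) k.
Proof.
case/andP=> k_in k_even.
by rewrite /obstruction /contract /= k_even ffunE /= eqxx /=; apply/orP; right; lia.
Qed.

Lemma pivot_contractible m k : pivot m = Some k -> k \in m.2 -> contractible k m.
Proof. by move/pivotP=> [/andP[k_even _] _] k_in; rewrite /contractible k_in k_even. Qed.

Lemma pivot_contract m k k0 :
  pivot m = Some k0 -> contractible k m -> k != k0 -> pivot (contract k m) = Some k0.
Proof.
move=> /pivotP [ob0 min0] k_ok kk0; apply/pivotP; split.
  by rewrite obstruction_contract // eq_sym.
have k0k : (k0 <= k)%N.
  by rewrite leqNgt; apply/negP => lt; move: (min0 _ lt); rewrite contractible_obstruction.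
move=> j lt; rewrite obstruction_contract ?min0 //.
by apply/negP => /eqP e; move: lt; rewrite e ltnNge k0k.
Qed.

Lemma pivot_contract_self m k :
  pivot m = Some k -> contractible k m -> pivot (contract k m) = Some k.
Proof.
move=> /pivotP [_ min] k_ok; apply/pivotP; split; first exact: obstruction_contract_self.
move=> j lt; rewrite obstruction_contract ?min //.
by apply/negP => /eqP e; move: lt; rewrite e ltnn.
Qed.

Lemma critical_not_contractible m k : critical m -> contractible k m = false.
Proof.
move=> /eqP /pivotN /(_ k) no_ob; apply/negP => /contractible_obstruction.
by rewrite (negbTE no_ob).
Qed.

Lemma contract_not_critical m k : contractible k m -> ~~ critical (contract k m).
Proof.
move=> k_ok; rewrite /critical; apply/negP => /eqP /pivotN /(_ k).
by rewrite obstruction_contract_self.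
Qed.

Lemma upper_contract m k k0 :
  pivot m = Some k0 -> k0 \in m.2 -> contractible k m -> k != k0 -> upper (contract k m).
Proof.
move=> p0 k0_in k_ok kk0; rewrite /upper (pivot_contract p0 k_ok kk0) /contract /=.
by rewrite in_setD1 k0_in andbT eq_sym.
Qed.

Definition subx (e : {ffun 'I_n -> nat}) (j : nat) : {ffun 'I_n -> nat} :=
  [ffun l : 'I_n => e l - 2 * (val l == j)]%N.
Definition expand (k : 'I_n) m : mon n := (subx m.1 k./2, k |: m.2).

Lemma expand_contract m k : contractible k m -> expand k (contract k m) = m.
Proof.
case/andP=> k_in _; case: m k_in => e S k_in; rewrite /expand /contract /=; congr (_, _).
  by apply/ffunP => l; rewrite !ffunE; case: (val l == _) => /=; lia.
by rewrite setD1K.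
Qed.

Lemma contract_expand m k : pivot m = Some k -> k \notin m.2 ->
  contractible k (expand k m) /\ contract k (expand k m) = m.
Proof.
move=> /pivotP [/andP[k_even ob] _] k_out; rewrite (negbTE k_out) /= in ob.
split; first by rewrite /contractible /expand /= setU11 k_even.
case: m k_out ob => e S k_out ob; rewrite /expand /contract /=; congr (_, _); last first.
  by rewrite setU1K.
apply/ffunP => l; rewrite !ffunE.
case: (eqVneq (val l) k./2) => [E|NE]; last by rewrite !muln0 subn0 !addn0.
have -> : l = half_ord k by apply/val_inj.
by move: ob => /= ob; lia.
Qed.

Lemma pivot_expand m k : pivot m = Some k -> k \notin m.2 -> pivot (expand k m) = Some k.
Proof.
move=> p k_out; have [k_ok E] := contract_expand p k_out.
move/pivotP: p => [ob min]; apply/pivotP; split; first exact: contractible_obstruction.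
move=> j lt; have jk : j != k by apply/negP => /eqP e; move: lt; rewrite e ltnn.
by rewrite -(obstruction_contract k_ok jk) E min.
Qed.

Definition match_down m := if pivot m is Some k then contract k m else m.
Definition match_up m := if pivot m is Some k then expand k m else m.

Lemma match_down_lower m : upper m -> lower (match_down m).
Proof.
rewrite /upper /match_down; case E: (pivot m) => [k|] // k_in.
by rewrite /lower (pivot_contract_self E (pivot_contractible E k_in)) /contract /= setD11.
Qed.

Lemma match_upP m : lower m -> upper (match_up m) /\ match_down (match_up m) = m.
Proof.
rewrite /lower /upper /match_up /match_down; case E: (pivot m) => [k|] // k_out.
have [_ Ek] := contract_expand E k_out.
by rewrite (pivot_expand E k_out) setU11 Ek.
Qed.

Lemma match_down_inj m m' : upper m -> upper m' -> match_down m = match_down m' -> m = m'.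
Proof.
rewrite /upper /match_down; case E: (pivot m) => [k|] // k_in.
case E': (pivot m') => [k'|] // k'_in eq_mm'.
have ok := pivot_contractible E k_in; have ok' := pivot_contractible E' k'_in.
have := pivot_contract_self E ok; rewrite eq_mm' (pivot_contract_self E' ok') => -[kk'].
by subst k'; rewrite -(expand_contract ok) eq_mm' expand_contract.
Qed.

Lemma match_down_deg m :
  upper m -> qdeg (match_down m) = qdeg m /\ tdeg m = (tdeg (match_down m)).+1.
Proof.
rewrite /upper /match_down; case E: (pivot m) => [k|] // k_in.
have k_ok := pivot_contractible E k_in.
by split; [exact: qdeg_contract | exact: tdeg_contract].
Qed.

Lemma dcoef_critical m m' : critical m -> dcoef F2 m m' = 0.
Proof. by move=> m_crit; rewrite dcoef_F2 big1 // => k _; rewrite critical_not_contractible. Qed.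

Lemma dcoef_upper_lower m m' : upper m -> lower m' -> dcoef F2 m m' = (m' == match_down m)%:R.
Proof.
move=> m_up m'_low; move: (m_up); rewrite /upper /match_down; case E: (pivot m) => [k0|] // k0_in.
rewrite dcoef_F2 (bigD1 k0) //= pivot_contractible // big1 ?addr0 // => k kk0.
case: (boolP (contractible k m)) => //= k_ok; case: eqP => // e.
by have := upper_contract E k0_in k_ok kk0; rewrite -e => /upper_lower; rewrite m'_low.
Qed.

Lemma dcoef_upper_critical m m' : upper m -> critical m' -> dcoef F2 m m' = 0.
Proof.
move=> _ m'_crit; rewrite dcoef_F2 big1 // => k _.
case: (boolP (contractible k m)) => //= k_ok; case: eqP => // e.
by move: (contract_not_critical k_ok); rewrite -e m'_crit.
Qed.

End Matching.

Arguments upper {n} m.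
Arguments lower {n} m.
Arguments critical {n} m.
Arguments match_down {n} m.
Arguments match_up {n} m.

Section Homology.
Variables n a : nat.
Local Notation s b := (basis n a b).
Local Notation D b := (Dmat F2 n a b).
Local Notation m0 := (mon0 n).

Definition upper_pos b := [set i : 'I_(size (s b)) | upper (nth m0 (s b) i)].
Definition critical_pos b := [set i : 'I_(size (s b)) | critical (nth m0 (s b) i)].

Lemma card_pos (T : Type) (x0 : T) (s : seq T) (P : pred T) :
  #|[set i : 'I_(size s) | P (nth x0 s i)]| = count P s.
Proof. by rewrite -sum1dep_card -sum1_count (big_nth x0) big_mkord; apply: eq_bigl => i. Qed.

Lemma match_down_mem b (m : mon n) : m \in s b -> upper m -> match_down m \in dtgt n a b.
Proof.
rewrite mem_basis => /andP[/eqP qm /eqP tm] m_up; have [q t] := match_down_deg m_up.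
case: b tm => [|b] tm; first by rewrite t in tm.
by rewrite /dtgt mem_basis q qm eqxx /=; move: tm; rewrite t => -[->].
Qed.

Lemma upper_nth b (u : 'I_#|upper_pos b|) : upper (nth m0 (s b) (enum_val u)).
Proof. by have := enum_valP u; rewrite inE. Qed.
Lemma critical_nth b (c : 'I_#|critical_pos b|) : critical (nth m0 (s b) (enum_val c)).
Proof. by have := enum_valP c; rewrite inE. Qed.

Lemma match_down_nth_eq b (u u' : 'I_#|upper_pos b|) :
  (match_down (nth m0 (s b) (enum_val u')) == match_down (nth m0 (s b) (enum_val u)))
  = (u == u').
Proof.
apply/eqP/eqP => [E|->] //; apply: enum_val_inj; apply: val_inj; apply/eqP.
rewrite -(nth_uniq m0 (ltn_ord _) (ltn_ord _) (uniq_basis n a b)).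
by rewrite (match_down_inj (upper_nth u) (upper_nth u') (esym E)).
Qed.

Lemma dcoef_match_down b (u u' : 'I_#|upper_pos b|) :
  \sum_(y <- dtgt n a b) dcoef F2 (nth m0 (s b) (enum_val u)) y
                         * (y == match_down (nth m0 (s b) (enum_val u')))%:R = (u == u')%:R.
Proof.
under eq_bigr do rewrite mulrC.
rewrite sum_delta_seq ?uniq_dtgt ?match_down_mem ?mem_nth ?upper_nth //.
by rewrite dcoef_upper_lower ?upper_nth ?match_down_lower ?upper_nth // match_down_nth_eq.
Qed.

Lemma rank_Dmat_ge b : (count upper (s b) <= \rank (D b))%N.
Proof.
rewrite -(card_pos m0); set U := #|upper_pos b|.
pose M : 'M[F2]_(U, size (s b)) := \matrix_(u < U, i < size (s b)) (i == enum_val u)%:R.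
pose N : 'M[F2]_(size (dtgt n a b), U) :=
  \matrix_(j < size (dtgt n a b), u < U)
    (nth m0 (dtgt n a b) j == match_down (nth m0 (s b) (enum_val u)))%:R.
apply: (@mulmx1_min_rank _ _ _ _ _ M N); apply/matrixP => u u'; rewrite !mxE.
under eq_bigr do rewrite !mxE.
under eq_bigr do (under eq_bigr do rewrite !mxE; rewrite sum_delta_ord).
by rewrite (sum_nth m0 (dtgt n a b) (fun y => dcoef F2 _ y * (y == _)%:R)) dcoef_match_down.
Qed.

(* The boundaries of the upper monomials of degree b+1 and the critical monomials of
   degree b are independent cycles: dim ker d_2 >= #upper_(b+1) + #critical_b. *)
Lemma rank_kermx_ge b :
  (count upper (s b.+1) + count critical (s b) <= \rank (kermx (D b)))%N.
Proof.
rewrite -!(card_pos m0); set U := #|upper_pos b.+1|; set C := #|critical_pos b|.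
pose K : 'M[F2]_(U + C, size (s b)) := \matrix_(i < U + C, j < size (s b))
  match split i with inl u => D b.+1 (enum_val u) j | inr c => (j == enum_val c)%:R end.
pose N : 'M[F2]_(size (s b), U + C) := \matrix_(j < size (s b), i < U + C)
  match split i with
  | inl u => (nth m0 (s b) j == match_down (nth m0 (s b.+1) (enum_val u)))%:R
  | inr c => (j == enum_val c)%:R end.
have K_cycles : (K <= kermx (D b))%MS.
  rewrite sub_kermx; apply/eqP/matrixP => i l; rewrite !mxE /K.
  under eq_bigr do rewrite mxE.
  case: (split i) => [u|c] /=.
    by have := Dmat_square0 n a b; move/matrixP/(_ (enum_val u) l); rewrite !mxE.
  by rewrite sum_delta_ord mxE dcoef_critical ?critical_nth.
apply: leq_trans (mxrankS K_cycles).
apply: (@mulmx1_min_rank _ _ _ _ _ 1%:M N); rewrite mul1mx.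
apply/matrixP => i i'; rewrite !mxE /N /K; under eq_bigr do rewrite !mxE.
have -> : (i == i') = (split i == split i').
  by apply/eqP/eqP => [->//|/(congr1 unsplit)]; rewrite !splitK.
case: (split i) => [u|c]; case: (split i') => [u'|c'] /=.
- under eq_bigr do rewrite mxE.
  rewrite (sum_nth m0 (s b) (fun y => dcoef F2 _ y * (y == _)%:R)).
  by rewrite -[s b]/(dtgt n a b.+1) dcoef_match_down.
- under eq_bigr do rewrite mulrC.
  by rewrite sum_delta_ord mxE dcoef_upper_critical ?upper_nth ?critical_nth.
- rewrite sum_delta_ord; case: eqP => // E.
  by have := match_down_lower (upper_nth u'); rewrite -E => /lower_critical; rewrite critical_nth.
- by rewrite sum_delta_ord; congr ((nat_of_bool _)%:R); apply/eqP/eqP => [/enum_val_inj->|[->]].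
Qed.

Lemma count_trichotomy (t : seq (mon n)) :
  size t = (count upper t + count lower t + count critical t)%N.
Proof.
elim: t => //= x t ->.
case: (boolP (upper x)) => [u|nu]; first by rewrite (upper_lower u) (upper_critical u) /=; lia.
case: (boolP (lower x)) => [l|nl]; first by rewrite (lower_critical l) /=; lia.
by have := matching_trichotomy x; rewrite (negbTE nu) (negbTE nl) /= => ->; lia.
Qed.

(* The matching is a bijection between lower monomials of degree b and upper ones of degree b+1. *)
Lemma count_lower b : count lower (s b) = count upper (s b.+1).
Proof.
apply/eqP; rewrite eqn_leq -!size_filter; apply/andP; split.
  rewrite -(size_map match_up); apply: uniq_leq_size.
    rewrite map_inj_in_uniq; first exact: filter_uniq (uniq_basis _ _ _).
    move=> x y; rewrite !mem_filter => /andP[x_low _] /andP[y_low _] E.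
    by rewrite -(match_upP x_low).2 -(match_upP y_low).2 E.
  move=> z /mapP [x]; rewrite mem_filter => /andP[x_low x_in] ->.
  have [x_up x_down] := match_upP x_low; rewrite mem_filter x_up /=.
  have [q t] := match_down_deg x_up; rewrite x_down in q t.
  by rewrite mem_basis -q t; move: x_in; rewrite mem_basis => /andP[/eqP -> /eqP ->]; rewrite !eqxx.
rewrite -(size_map match_down); apply: uniq_leq_size.
  rewrite map_inj_in_uniq; first exact: filter_uniq (uniq_basis _ _ _).
  by move=> x y; rewrite !mem_filter => /andP[x_up _] /andP[y_up _]; apply: match_down_inj.
move=> z /mapP [x]; rewrite mem_filter => /andP[x_up x_in] ->.
by rewrite mem_filter match_down_lower //=; apply: (match_down_mem x_in x_up).
Qed.

Lemma rank_Dmat b : \rank (D b) = count upper (s b).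
Proof.
have := rank_Dmat_ge b; have := rank_kermx_ge b; rewrite mxrank_ker.
have := rank_leq_row (D b); have := count_trichotomy (s b); have := count_lower b; lia.
Qed.

Lemma Hdim_F2 b : Hdim F2 n a b = count critical (s b).
Proof.
have D_cycles : (D b.+1 <= kermx (D b))%MS by rewrite sub_kermx Dmat_square0.
rewrite /Hdim mxrank_ker (capmx_idPr D_cycles) !rank_Dmat.
have := count_trichotomy (s b); have := count_lower b; lia.
Qed.

End Homology.

(* Polynomials in q (outer variable) and t (inner variable) over int. *)
Notation Q := {poly {poly int}}.

Definition cf (p : Q) : ps := fun x y => p`_x`_y.

Definition mono (c : int) (i j : nat) : Q := (c *: 'X^j)%:P * 'X^i.

Lemma cf_mono c i j x y : cf (mono c i j) x y = c * ((x == i) && (y == j))%:R.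
Proof.
rewrite /cf /mono coefMXn; case: ltnP => h.
  by rewrite coef0 (_ : (x == i) = false) ?mulr0 //; apply/negbTE; rewrite neq_ltn h.
rewrite coefC (_ : (x - i == 0)%N = (x == i)); last by apply/eqP/eqP; lia.
by case: (x == i); rewrite ?coef0 ?mulr0 // coefZ coefXn.
Qed.

Lemma monoM c c' i i' j j' : mono c i j * mono c' i' j' = mono (c * c') (i + i') (j + j').
Proof.
rewrite /mono mulrACA -exprD; congr (_ * _).
by rewrite -polyCM -scalerAl -scalerAr -exprD scalerA.
Qed.

Lemma mono1 : mono 1 0 0 = 1.
Proof. by rewrite /mono !expr0 scale1r mulr1. Qed.

Lemma mono0 i j : mono 0 i j = 0.
Proof. by rewrite /mono scale0r mul0r. Qed.

Lemma monoN c i j : mono (- c) i j = - mono c i j.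
Proof. by rewrite /mono scaleNr polyCN mulNr. Qed.

Lemma monoX c i j k : mono c i j ^+ k = mono (c ^+ k) (k * i) (k * j).
Proof. by elim: k => [|k IH]; rewrite ?expr0 ?mono1 // exprS IH monoM -exprS !mulSn. Qed.

Lemma cf1 x y : cf 1 x y = ps1 x y.
Proof. by rewrite -mono1 cf_mono mul1r /ps1 natz. Qed.

Lemma cfD p q x y : cf (p + q) x y = cf p x y + cf q x y.
Proof. by rewrite /cf !coefD. Qed.

Lemma cfM p q x y : cf (p * q) x y = psmul (cf p) (cf q) x y.
Proof. by rewrite /cf coefM coef_sum; apply: eq_bigr => i _; rewrite coefM. Qed.

Lemma cf_sum (I : Type) (r : seq I) (P : pred I) (F : I -> Q) x y :
  cf (\sum_(i <- r | P i) F i) x y = \sum_(i <- r | P i) cf (F i) x y.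
Proof. by rewrite /cf !coef_sum. Qed.

Section Truncation.
Variables A B : nat.

Definition agree (f g : ps) := forall x y, (x <= A)%N -> (y <= B)%N -> f x y = g x y.

Lemma agree_refl f : agree f f. Proof. by []. Qed.
Lemma agree_trans f g h : agree f g -> agree g h -> agree f h.
Proof. by move=> fg gh x y hx hy; rewrite fg // gh. Qed.

Lemma agree_psmul f f' g g' : agree f f' -> agree g g' -> agree (psmul f g) (psmul f' g').
Proof.
move=> ff' gg' x y hx hy; apply: eq_bigr => i _; apply: eq_bigr => j _.
have [hi hj] : (i <= A)%N /\ (j <= B)%N by have := ltn_ord i; have := ltn_ord j; lia.
by rewrite ff' ?gg' //; lia.
Qed.

Lemma agree_mul p p' q q' :
  agree (cf p) (cf p') -> agree (cf q) (cf q') -> agree (cf (p * q)) (cf (p' * q')).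
Proof. by move=> pp' qq' x y hx hy; rewrite !cfM; apply: agree_psmul. Qed.

Lemma agree_prod m (P : pred 'I_m) (F G : 'I_m -> Q) :
  (forall i, P i -> agree (cf (F i)) (cf (G i))) ->
  agree (cf (\prod_(i < m | P i) F i)) (cf (\prod_(i < m | P i) G i)).
Proof.
by move=> FG; apply: (big_ind2 (fun p q => agree (cf p) (cf q))) => //; exact: agree_mul.
Qed.

Lemma agree_psprod m (F : 'I_m -> ps) (G : 'I_m -> Q) :
  (forall i, agree (F i) (cf (G i))) ->
  agree (\big[psmul/ps1]_(i < m) F i) (cf (\prod_(i < m) G i)).
Proof.
move=> FG; apply: (big_ind2 (fun f p => agree f (cf p))) => [x y _ _|f f' p p' ff' pp'|//].
  by rewrite cf1.
by move=> x y hx hy; rewrite cfM; apply: agree_psmul.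
Qed.

Lemma agree_high p r c I J : (A < I)%N -> agree (cf (p + r * mono c I J)) (cf p).
Proof.
move=> AI x y hx _.
by rewrite cfD /cf /mono mulrA coefMXn (_ : (x < I)%N) ?coef0 ?addr0 //; lia.
Qed.

(* The truncated geometric series 1 + y + ... + y^A, standing for 1/(1 - y). *)
Definition geo (y : Q) := \sum_(k < A.+1) y ^+ k.

Lemma agree_ps1p c al be : agree (ps1p c al be) (cf (1 + mono c al be)).
Proof.
move=> x y _ _; rewrite cfD cf1 cf_mono /ps1p; congr (_ + _).
by case: ifP; rewrite ?mulr1 ?mulr0.
Qed.

Lemma agree_psgeom c al be : (0 < al)%N -> agree (psgeom c al be) (cf (geo (mono c al be))).
Proof.
move=> al_gt0 x y hx _; rewrite cf_sum; under eq_bigr do rewrite monoX cf_mono.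
rewrite /psgeom; case: (boolP (al %| x)%N) => al_x /=; last first.
  rewrite big1 // => k _; rewrite (_ : (x == k * al)%N = false) ?mulr0 //.
  by apply/negP => /eqP e; move: al_x; rewrite e dvdn_mull.
have xk : (x %/ al < A.+1)%N by rewrite ltnS; apply: leq_trans hx; exact: leq_div.
rewrite (bigD1 (Ordinal xk)) //= big1 ?addr0.
  by rewrite mulnC divnK // eqxx /=; case: ifP; rewrite ?mulr1 ?mulr0.
move=> k k_ne; rewrite (_ : (x == k * al)%N = false) ?mulr0 //.
by apply/negP => /eqP e; move: k_ne; rewrite -(inj_eq val_inj) /= e mulnK // eqxx.
Qed.

Lemma agree_geo_square c al be : (0 < al)%N ->
  agree (cf ((1 - mono c al be ^+ 2) * geo (mono c al be))) (cf (1 + mono c al be)).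
Proof.
move=> al_gt0; set y := mono c al be.
have -> : (1 - y ^+ 2) * geo y = (1 + y) + (- (1 + y)) * mono (c ^+ A.+1) (A.+1 * al) (A.+1 * be).
  rewrite -monoX /geo -/y (_ : 1 - y ^+ 2 = - (1 + y) * (y - 1)); last by ring.
  by rewrite -mulrA -(subrX1 y A.+1); ring.
by apply: agree_high; exact: leq_pmulr.
Qed.

Lemma agree_geo_inverse c al be : (0 < al)%N ->
  agree (cf ((1 + mono c al be) * geo (- mono c al be))) (cf 1).
Proof.
move=> al_gt0; set y := mono c al be.
have -> : (1 + y) * geo (- y) = 1 + (- 1) * mono ((- c) ^+ A.+1) (A.+1 * al) (A.+1 * be).
  rewrite -monoX monoN /geo -/y (_ : 1 + y = - ((- y) - 1)); last by ring.
  by rewrite [in LHS]mulNr -(subrX1 (- y) A.+1); ring.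
by apply: agree_high; exact: leq_pmulr.
Qed.

End Truncation.

Lemma prod_even (F : nat -> Q) m :
  \prod_(i < m | ~~ odd i) F i = \prod_(j < uphalf m) F (2 * j)%N.
Proof.
elim: m => [|m IH]; first by rewrite !big_ord0.
rewrite big_mkcond big_ord_recr /= -big_mkcond IH.
have := uphalf_half m; have := odd_double_half m.
case: (boolP (odd m)) => /= m_odd; first by rewrite mulr1 => _ ->.
rewrite !add0n => m_half ->; rewrite big_ord_recr /=; congr (_ * F _); lia.
Qed.

Lemma prod_split_low (F : nat -> Q) m h : (h <= m)%N ->
  \prod_(i < m) F i = \prod_(i < h) F i * \prod_(i < m | ~~ (i < h)%N) F i.
Proof.
move=> hm; rewrite (bigID (fun i : 'I_m => (i < h)%N)) /=.
by rewrite -(big_ord_widen_cond _ (fun _ => true) (fun i => F i) hm).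
Qed.

Section ClosedForm.
Variables A B n : nat.
Hypothesis n_gt0 : (0 < n)%N.
Local Notation h := (uphalf n).

Definition xmon (i : nat) := mono 1 (2 * i + 2) (2 * i).
Definition ximon (i : nat) := mono 1 (2 * i + 4) (2 * i + 1).

Definition Ptrunc :=
  (\prod_(i < n) ((1 + ximon i) * geo A (xmon i))) *
  (\prod_(i < (n.-1)./2.+1) ((1 + mono (-1) (4 * i + 4) (4 * i)) *
                             geo A (mono (-1) (4 * i + 4) (4 * i + 1)))).

Lemma agree_Pseries : agree A B (Pseries n) (cf Ptrunc).
Proof.
move=> x y hx hy; rewrite cfM; move: x y hx hy; apply: agree_psmul;
  apply: agree_psprod => i x y hx hy; rewrite cfM; move: x y hx hy;
  by apply: agree_psmul; [exact: agree_ps1p | apply: agree_psgeom; lia].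
Qed.

(* The series of F_2[x_0..x_{n-1}]/(x_0^2, .., x_{h-1}^2) (x) Lambda[xi_l, l odd],
   with h = ceil(n/2) the number of even indices below n. *)
Definition x_factor (l : nat) := if (l < h)%N then 1 + xmon l else geo A (xmon l).
Definition xi_factor (l : nat) := if odd l then 1 + ximon l else 1.
Definition Hseries := \prod_(l < n) (x_factor l * xi_factor l).

(* Since d_2 xi_{2i} = x_i^2, the factors (1 + xi_{2i})/(1 - x_i^2) of Pseries cancel
   against the factors 1/(1 + xi_{2i}) and (1 - x_i^2) of its second product. *)
Lemma agree_Ptrunc_Hseries : agree A B (cf Ptrunc) (cf Hseries).
Proof.
have h_le : (h <= n)%N by rewrite leq_uphalf_double -addnn leq_addl.
have h_eq : (n.-1)./2.+1 = h by case: n n_gt0.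
set O := \prod_(i < n | odd i) (1 + ximon i).
set G := \prod_(i < n | ~~ (i < h)%N) geo A (xmon i).
have cancel_factors :
    \prod_(i < h) ((1 + mono (-1) (4 * i + 4) (4 * i)) * geo A (mono (-1) (4 * i + 4) (4 * i + 1)))
  = \prod_(i < h) ((1 - xmon i ^+ 2) * geo A (- ximon (2 * i))).
  apply: eq_bigr => i _; rewrite /xmon /ximon monoX !monoN expr1n.
  by congr ((1 - mono _ _ _) * geo A (- mono _ _ _)); lia.
have -> : Ptrunc = (O * G) * \prod_(i < h) ((1 - xmon i ^+ 2) * geo A (xmon i))
                 * \prod_(i < h) ((1 + ximon (2 * i)) * geo A (- ximon (2 * i))).
  rewrite /Ptrunc h_eq cancel_factors big_split /=.
  rewrite (bigID (fun i : 'I_n => odd i)) /= (prod_even (fun i => 1 + ximon i)) -/O.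
  rewrite (prod_split_low (fun i => geo A (xmon i)) h_le) -/G !big_split /=; ring.
have -> : Hseries = (O * G) * \prod_(i < h) (1 + xmon i) * 1.
  rewrite /Hseries big_split /= (prod_split_low x_factor h_le).
  rewrite (eq_bigr (fun i : 'I_h => 1 + xmon i)) => [|i _]; last by rewrite /x_factor ltn_ord.
  rewrite (eq_bigr (fun i : 'I_n => geo A (xmon i)) (P := fun i : 'I_n => ~~ (i < h)%N))
          -/G; last first.
    by move=> i /negbTE i_high; rewrite /x_factor i_high.
  by rewrite (_ : \prod_(i < n) xi_factor i = O) ?[RHS]big_mkcond //; ring.
apply: agree_mul; first apply: agree_mul; first exact: agree_refl.
  by apply: agree_prod => i _; apply: agree_geo_square; lia.
apply: (@agree_trans A B _ (cf (\prod_(i < h) 1))); last by rewrite big1.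
by apply: agree_prod => i _; apply: agree_geo_inverse; lia.
Qed.

End ClosedForm.

Lemma prod_mono (I : Type) (r : seq I) (c : I -> int) (p q : I -> nat) :
  \prod_(i <- r) mono (c i) (p i) (q i) =
  mono (\prod_(i <- r) c i) (\sum_(i <- r) p i) (\sum_(i <- r) q i).
Proof. by elim: r => [|x r IH]; rewrite ?big_nil ?mono1 // !big_cons IH monoM. Qed.

Lemma if_mono (P : bool) c al be e :
  (if P then mono c al be ^+ e else 0) = mono ((P : nat)%:R * c ^+ e) (e * al) (e * be).
Proof. by case: P; rewrite ?mul1r ?mul0r ?mono0 // monoX. Qed.

Lemma prod_indicator (I : finType) (P : pred I) :
  \prod_(i : I) ((P i : nat)%:R : int) = ([forall i, P i] : nat)%:R.
Proof.
case: (boolP [forall i, P i]) => [/forallP all_P|/forallPn [i0 not_P]].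
  by rewrite big1 // => i _; rewrite all_P.
by rewrite (bigD1 i0) //= (negbTE not_P) mul0r.
Qed.

Section Expansion.
Variables n a b : nat.
Local Notation h := (uphalf n).
Local Notation expo := {ffun 'I_n -> 'I_a.+1}.
Local Notation supp := {ffun 'I_n -> bool}.

Definition x_term (l : nat) :=
  \sum_(e < a.+1) (if (l < h)%N ==> (e <= 1)%N then xmon l ^+ e else 0).
Definition xi_term (l : nat) := \sum_(s : bool) (if odd l || ~~ s then ximon l ^+ s else 0).

Lemma agree_x_term l : agree a b (cf (x_factor a n l)) (cf (x_term l)).
Proof.
rewrite /x_factor /x_term; case: (boolP (l < h)%N) => l_low //=.
case: a => [|a'].
  rewrite big_ord_recl big_ord0 /= expr0 addr0 -[xmon l]mul1r.
  by apply: agree_high; lia.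
by rewrite big_ord_recl big_ord_recl big1 ?addr0 //= expr0 expr1.
Qed.

Lemma xi_termE l : xi_factor l = xi_term l.
Proof.
rewrite /xi_factor /xi_term big_bool /= orbT ?orbF expr1 expr0.
by case: (odd l); rewrite ?add0r // addrC.
Qed.

Lemma agree_Hseries_terms :
  agree a b (cf (Hseries a n)) (cf (\prod_(l < n) (x_term l * xi_term l))).
Proof.
apply: agree_prod => l _; rewrite xi_termE.
by apply: agree_mul; [exact: agree_x_term | exact: agree_refl].
Qed.

Definition x_admissible (f : expo) := [forall l : 'I_n, (l < h)%N ==> (f l <= 1)%N].
Definition xi_admissible (g : supp) := [forall l : 'I_n, odd l || ~~ g l].
Definition x_qdeg (f : expo) := (\sum_(l < n) f l * (2 * l + 2))%N.
Definition x_tdeg (f : expo) := (\sum_(l < n) f l * (2 * l))%N.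
Definition xi_qdeg (g : supp) := (\sum_(l < n) g l * (2 * l + 4))%N.
Definition xi_tdeg (g : supp) := (\sum_(l < n) g l * (2 * l + 1))%N.

Definition weight (f : expo) (g : supp) : int :=
  ((x_admissible f && xi_admissible g) &&
   ((x_qdeg f + xi_qdeg g == a)%N && (x_tdeg f + xi_tdeg g == b)%N) : nat)%:R.

Lemma prod_x_term :
  \prod_(l < n) x_term l = \sum_(f : expo) mono (x_admissible f : nat)%:R (x_qdeg f) (x_tdeg f).
Proof.
rewrite /x_term bigA_distr_bigA /=; apply: eq_bigr => f _.
under eq_bigr do rewrite /xmon if_mono expr1n mulr1.
by rewrite prod_mono prod_indicator.
Qed.

Lemma prod_xi_term :
  \prod_(l < n) xi_term l = \sum_(g : supp) mono (xi_admissible g : nat)%:R (xi_qdeg g) (xi_tdeg g).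
Proof.
rewrite /xi_term bigA_distr_bigA /=; apply: eq_bigr => g _.
under eq_bigr do rewrite /ximon if_mono expr1n mulr1.
by rewrite prod_mono prod_indicator.
Qed.

Lemma cf_terms :
  cf (\prod_(l < n) (x_term l * xi_term l)) a b = \sum_(f : expo) \sum_(g : supp) weight f g.
Proof.
rewrite big_split /= prod_x_term prod_xi_term mulr_suml cf_sum; apply: eq_bigr => f _.
rewrite mulr_sumr cf_sum; apply: eq_bigr => g _.
rewrite monoM cf_mono (eq_sym a) (eq_sym b) /weight.
by case: (x_admissible f); case: (xi_admissible g); rewrite /= ?mul1r ?mul0r.
Qed.

End Expansion.

Section CriticalCount.
Variables n a b : nat.
Local Notation h := (uphalf n).
Local Notation expo := {ffun 'I_n -> 'I_a.+1}.

Lemma critical_tomon (f : expo) (S : {set 'I_n}) :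
  critical (tomon (f, S)) = x_admissible f && xi_admissible [ffun l => l \in S].
Proof.
rewrite criticalE; apply/forallP/andP => [no_ob|[/forallP f_ok /forallP S_ok] k]; last first.
  rewrite /obstruction /=; case: (boolP (odd k)) => //= k_even.
  move: (S_ok k); rewrite ffunE (negbTE k_even) /= => /negbTE ->.
  have k_low : (half_ord k < h)%N by rewrite /= gtn_uphalf_double even_half.
  by move: (f_ok (half_ord k)); rewrite k_low ffunE -leqNgt.
split; apply/forallP => l; last first.
  rewrite ffunE; case: (boolP (odd l)) => //= l_even.
  by move: (no_ob l); rewrite /obstruction l_even /= negb_or => /andP[].
apply/implyP => l_low; have l2 : (l.*2 < n)%N by rewrite -gtn_uphalf_double.
move: (no_ob (Ordinal l2)); rewrite /obstruction /= odd_double /= negb_or => /andP[_].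
by rewrite ffunE -leqNgt (_ : half_ord (Ordinal l2) = l) //; apply/val_inj; rewrite /= doubleK.
Qed.

Lemma qdeg_tomon (f : expo) (S : {set 'I_n}) :
  qdeg (tomon (f, S)) = (x_qdeg f + xi_qdeg [ffun l => l \in S])%N.
Proof.
rewrite /qdeg /x_qdeg /xi_qdeg /=; congr (_ + _)%N.
  by apply: eq_bigr => l _; rewrite ffunE mulnC.
by rewrite big_mkcond; apply: eq_bigr => l _; rewrite ffunE; case: (l \in S); rewrite ?mul1n.
Qed.

Lemma tdeg_tomon (f : expo) (S : {set 'I_n}) :
  tdeg (tomon (f, S)) = (x_tdeg f + xi_tdeg [ffun l => l \in S])%N.
Proof.
rewrite /tdeg /x_tdeg /xi_tdeg /=; congr (_ + _)%N.
  by apply: eq_bigr => l _; rewrite ffunE mulnC.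
by rewrite big_mkcond; apply: eq_bigr => l _; rewrite ffunE; case: (l \in S); rewrite ?mul1n.
Qed.

Lemma count_critical :
  (count critical (basis n a b))%:Z = \sum_(f : expo) \sum_(g : {ffun 'I_n -> bool}) weight b f g.
Proof.
rewrite /basis count_filter /image_mem count_map -sum1_count big_mkcond big_enum /=.
rewrite -natz natr_sum.
rewrite (eq_bigr (fun f => \sum_(S : {set 'I_n}) weight b f [ffun l => l \in S])); last first.
  move=> f _; rewrite (reindex (fun S : {set 'I_n} => [ffun l => l \in S])) //.
  exists (fun g : {ffun 'I_n -> bool} => [set l | g l]) => [S _|g _].
    by apply/setP => l; rewrite inE ffunE.
  by apply/ffunP => l; rewrite !ffunE inE.
rewrite pair_big /=; apply: eq_big => [[f S]|[f S] _] //=.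
rewrite /weight -critical_tomon -qdeg_tomon -tdeg_tomon.
by case: [&& _, _ & _].
Qed.

End CriticalCount.

Theorem mainTheorem1 (n : nat) (hn : (0 < n)%N) (a b : nat) :
  ((Hdim [the fieldType of 'F_2] n a b)%:Z = Pseries n a b)%R.
Proof.
have series_terms : agree a b (Pseries n) (cf (\prod_(l < n) (x_term n a l * xi_term l))).
  apply: agree_trans (agree_trans (@agree_Pseries a b n hn) (@agree_Ptrunc_Hseries a b n hn)) _.
  exact: agree_Hseries_terms.
by rewrite Hdim_F2 count_critical -cf_terms series_terms.
Qed.
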